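(* Let $n$ be a positive integer and let $F_n=K_1\vee P_n$ be the fan of order $n+1$. Then $\gamma_{sR}(F_n)=2$ if $n\in\{2,4\}$, and $\gamma_{sR}(F_n)=1$ if $n\notin\{2,4\}$.
   Context: $P_n$ denotes the path on $n$ vertices and $K_1$ the one-vertex graph. The join $G_1\vee G_2$ of two graphs has vertex set $V(G_1)\cup V(G_2)$ (disjoint union) and edge set $E(G_1)\cup E(G_2)\cup\{uv: u\in V(G_1), v\in V(G_2)\}$. For a graph $G=(V,E)$ and $x\in V$, $N_G[x]=\{x\}\cup\{y: xy\in E\}$. A signed Roman dominating function (SRDF) on $G$ is a function $f:V\to\{-1,1,2\}$ such that (a) $\sum_{y\in N_G[x]}f(y)\geq 1$ for every $x\in V$, and (b) every vertex $x$ with $f(x)=-1$ is adjacent to at least one vertex $y$ with $f(y)=2$. The weight of $f$ is $\sum_{x\in V}f(x)$, and $\gamma_{sR}(G)$ is the minimum weight of an SRDF on $G$. *)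

From mathcomp Require Import all_boot all_algebra.
Set Implicit Arguments. Unset Strict Implicit. Unset Printing Implicit Defensive.
Import GRing.Theory Num.Theory.
Local Open Scope ring_scope.

Record sgraph := SGraph {
  vert :> finType;
  adj : rel vert;
  adj_sym : symmetric adj;
  adj_irr : irreflexive adj }.

Definition cnbhd (G : sgraph) (x : G) : {set G} := [set y | (y == x) || adj x y].

Definition is_SRDF (G : sgraph) (f : G -> int) : Prop :=
  (forall x, f x = -1 \/ f x = 1 \/ f x = 2) /\
  (forall x, 1 <= \sum_(y in cnbhd x) f y) /\
  (forall x, f x = -1 -> exists y, adj x y /\ f y = 2).

Definition weight (G : sgraph) (f : G -> int) : int := \sum_(x : G) f x.

Definition gamma_sR_is (G : sgraph) (w : int) : Prop :=
  (exists f : G -> int, is_SRDF f /\ weight f = w) /\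
  (forall f : G -> int, is_SRDF f -> w <= weight f).

Definition path_adj (n : nat) : rel 'I_n :=
  fun i j => (i.+1 == j :> nat) || (j.+1 == i :> nat).

(* Fan F_n = K_1 \/ P_n : vertex set option 'I_n, None is the K_1 vertex. *)
Definition fan_adj (n : nat) : rel (option 'I_n) :=
  fun u v => match u, v with
  | None, None => false
  | None, Some _ | Some _, None => true
  | Some i, Some j => path_adj i j
  end.

Lemma fan_adj_sym n : symmetric (@fan_adj n).
Proof. by move=> [i|] [j|] //=; rewrite /path_adj orbC. Qed.

Lemma fan_adj_irr n : irreflexive (@fan_adj n).
Proof. by move=> [i|] //=; rewrite /path_adj; case: (nat_of_ord i) => //= k; rewrite !eqn_leq ltnn ?leqnSn /= ?andbF. Qed.

Definition fan (n : nat) : sgraph := SGraph (@fan_adj_sym n) (@fan_adj_irr n).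

(* The centre of the fan F_n is adjacent to every vertex, so its closed
   neighbourhood sum is the whole weight: every SRDF has weight at least 1.
   Weight 1 is attained by labelling the centre 2 and the path with labels
   whose sums over closed path neighbourhoods are at least -1 and whose total
   is -1: alternately -1, 1, ..., -1 for odd n, and -1, 1, -1, -1, 2, -1
   followed by alternately 1, -1 for even n >= 6.  For n = 2 and n = 4 the path
   splits into pairs, each inside the closed neighbourhood of an end vertex;
   as two labels never sum to -1, weight 1 would leave no label 2 at all
   although some label is -1. *)

From mathcomp Require Import all_boot all_algebra zify.
Import GRing.Theory.
Set Implicit Arguments. Unset Strict Implicit.
Local Open Scope ring_scope.

Lemma sum_option (T : finType) (F : option T -> int) :
  \sum_(x : option T) F x = F None + \sum_(i : T) F (Some i).
Proof.
rewrite (bigD1 None) //=; congr (_ + _).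
rewrite (reindex_omap Some id) //=; last by case.
by apply: eq_bigl => i; rewrite eqxx.
Qed.

Section UniversalVertex.
Variables (G : sgraph) (x : G).
Hypothesis x_universal : forall y : G, (y == x) || adj x y.

Lemma sum_cnbhd_universal (f : G -> int) : \sum_(y in cnbhd x) f y = weight f.
Proof. by apply: eq_bigl => y; rewrite inE x_universal. Qed.

Lemma SRDF_weight_ge1 (f : G -> int) : is_SRDF f -> 1 <= weight f.
Proof. by case=> _ [cnbhd_ge1 _]; rewrite -sum_cnbhd_universal. Qed.

End UniversalVertex.

Lemma SRDF_has_2_or_const1 (G : sgraph) (f : G -> int) :
  is_SRDF f -> (exists y, f y = 2) \/ (forall y, f y = 1).
Proof.
case=> vals [_ minus1_dominated].
case: (boolP [exists y, f y == 2]) => [/existsP [y /eqP fy2]|/existsPn no2].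
  by left; exists y.
right=> y; have := no2 y; case: (vals y) => [fy|[fy|->]] //.
by have [z [_ fz2]] := minus1_dominated y fy; have := no2 z; rewrite fz2.
Qed.

Definition path_window_sum (n : nat) (h : nat -> int) (i : nat) : int :=
  h i + (if (0 < i)%N then h i.-1 else 0) + (if (i.+1 < n)%N then h i.+1 else 0).

Lemma sum_path_cnbhd n (h : nat -> int) (i : 'I_n) :
  \sum_(j < n | (j == i) || path_adj i j) h j = path_window_sum n h i.
Proof.
have split_cond (j : 'I_n) : (if (j == i) || path_adj i j then h j else 0) =
    (if j == i :> nat then h j else 0) + (if j == i.+1 :> nat then h j else 0)
    + (if (0 < i)%N then (if j == i.-1 :> nat then h j else 0) else 0).
  rewrite /path_adj -val_eqE; case: i j => i Hi [j Hj] /=.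
  by repeat case: ifP => ?; lia.
rewrite big_mkcond (eq_bigr _ (fun j _ => split_cond j)) !big_split /=.
rewrite -!big_mkcond !big_ord1_eq ltn_ord /path_window_sum.
case: (posnP i) => [_|i_gt0]; first by rewrite big_pred0 // !addr0.
by rewrite -big_mkcond big_ord1_eq (leq_ltn_trans (leq_pred i) (ltn_ord i)) addrAC.
Qed.

Lemma fan_center_universal n (y : fan n) : (y == None) || adj (None : fan n) y.
Proof. by case: y. Qed.

Section FanLabels.
Variables (n : nat) (f : fan n -> int) (h : nat -> int).
Hypothesis f_Some : forall j : 'I_n, f (Some j) = h j.

Lemma weight_fan : weight f = f None + \sum_(0 <= k < n) h k.
Proof. by rewrite /weight sum_option big_mkord; congr (_ + _); apply: eq_bigr. Qed.

Lemma sum_cnbhd_fan_Some (i : 'I_n) :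
  \sum_(y in cnbhd (Some i : fan n)) f y = f None + path_window_sum n h i.
Proof.
rewrite big_mkcond sum_option inE /= -sum_path_cnbhd [in RHS]big_mkcond.
by congr (_ + _); apply: eq_bigr => j _; rewrite inE f_Some.
Qed.

End FanLabels.

Definition fan_labelling (n : nat) (g : nat -> int) : fan n -> int :=
  fun y => if y is Some j then g j else 2.
Arguments fan_labelling : clear implicits.

Section FanLabelling.
Variables (n : nat) (g : nat -> int).

Lemma weight_fan_labelling :
  weight (fan_labelling n g) = 2 + \sum_(0 <= k < n) g k.
Proof. exact: weight_fan. Qed.

Lemma fan_labelling_SRDF :
  (forall k, g k = -1 \/ g k = 1 \/ g k = 2) ->
  (forall i, (i < n)%N -> -1 <= path_window_sum n g i) ->
  -1 <= \sum_(0 <= k < n) g k ->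
  is_SRDF (fan_labelling n g).
Proof.
move=> vals window_ge sum_ge; split; [|split].
- by case=> [j|] /=; [apply: vals | right; right].
- case=> [i|].
    by rewrite (sum_cnbhd_fan_Some (h := g)) //=; have := window_ge i (ltn_ord i); lia.
  by rewrite (sum_cnbhd_universal (@fan_center_universal n)) weight_fan_labelling; lia.
- by case=> [j|] // _; exists None.
Qed.

End FanLabelling.

Definition alt (a : int) (k : nat) : int := if odd k then - a else a.

Lemma sum_alt a m : \sum_(0 <= k < m) alt a k = if odd m then a else 0.
Proof.
elim: m => [|m IHm]; first by rewrite big_geq.
by rewrite big_nat_recr //= IHm /alt; case: (odd m); rewrite ?addrN ?add0r.
Qed.

Section Alternating.
Variable a : int.
Hypothesis a_unit : a = 1 \/ a = -1.

Lemma alt_values k : alt a k = -1 \/ alt a k = 1 \/ alt a k = 2.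
Proof. rewrite /alt; case: ifP => _; lia. Qed.

Lemma path_window_sum_alt n i : -1 <= path_window_sum n (alt a) i.
Proof. rewrite /path_window_sum /alt; repeat case: ifP => ?; lia. Qed.

Lemma fan_labelling_alt_SRDF n : is_SRDF (fan_labelling n (alt a)).
Proof.
apply: fan_labelling_SRDF => [k|i _|]; first exact: alt_values.
  exact: path_window_sum_alt.
by rewrite sum_alt; case: a_unit => ->; case: ifP.
Qed.

End Alternating.

Definition prefixed_alt (k : nat) : int :=
  if (k < 6)%N then nth 0 [:: -1; 1; -1; -1; 2; -1] k else alt 1 k.

Lemma prefixed_alt_tail k : (6 <= k)%N -> prefixed_alt k = alt 1 k.
Proof. by move=> k_ge6; rewrite /prefixed_alt ltnNge k_ge6. Qed.

Lemma prefixed_alt_values k :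
  prefixed_alt k = -1 \/ prefixed_alt k = 1 \/ prefixed_alt k = 2.
Proof.
rewrite /prefixed_alt; case: ifP => [|_]; last by apply: alt_values; left.
by case: k => [|[|[|[|[|[|k]]]]]]; auto.
Qed.

Lemma path_window_sum_prefixed_alt n i :
  (6 <= n)%N -> -1 <= path_window_sum n prefixed_alt i.
Proof.
move=> n_ge6; have [i_lt7|i_ge7] := ltnP i 7.
  case: i i_lt7 => [|[|[|[|[|[|[|i]]]]]]] // _;
  by rewrite /path_window_sum /prefixed_alt /alt /=; repeat case: ifP => ?; lia.
rewrite /path_window_sum !prefixed_alt_tail; try lia.
by apply: path_window_sum_alt; left.
Qed.

Lemma sum_prefixed_alt n :
  (6 <= n)%N -> ~~ odd n -> \sum_(0 <= k < n) prefixed_alt k = -1.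
Proof.
move=> n_ge6 n_even; have := sum_alt 1 n.
rewrite !(@big_cat_nat _ _ _ 6 0 n) //= (negbTE n_even) sum_alt add0r.
rewrite [X in _ + X](eq_big_nat _ _ (F2 := alt 1)) => [->|k /andP[k_ge6 _]].
  by rewrite !big_nat_recr ?big_geq.
exact: prefixed_alt_tail.
Qed.

Lemma fan_labelling_prefixed_alt_SRDF n :
  (6 <= n)%N -> ~~ odd n -> is_SRDF (fan_labelling n prefixed_alt).
Proof.
move=> n_ge6 n_even; apply: fan_labelling_SRDF => [k|i _|].
- exact: prefixed_alt_values.
- exact: path_window_sum_prefixed_alt.
- by rewrite sum_prefixed_alt.
Qed.

Definition fan_path_labels (n : nat) (f : fan n -> int) (k : nat) : int :=
  if insub k is Some j then f (Some j) else 0.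

Section FanSRDF.
Variables (n : nat) (f : fan n -> int).
Hypothesis f_SRDF : is_SRDF f.
Let a := fan_path_labels f.

Lemma fan_path_labelsE (j : 'I_n) : f (Some j) = a j.
Proof. by rewrite /a /fan_path_labels valK. Qed.

Lemma fan_SRDF_center_value : f None = -1 \/ f None = 1 \/ f None = 2.
Proof. by case: f_SRDF. Qed.

Lemma fan_SRDF_path_value k : (k < n)%N -> a k = -1 \/ a k = 1 \/ a k = 2.
Proof.
by move=> k_lt; case: f_SRDF => vals _; rewrite -[k]/(val (Ordinal k_lt)) -fan_path_labelsE.
Qed.

Lemma fan_SRDF_window k : (k < n)%N -> 1 <= f None + path_window_sum n a k.
Proof.
move=> k_lt; case: f_SRDF => _ [cnbhd_ge1 _].
by rewrite -[k]/(val (Ordinal k_lt)) -(sum_cnbhd_fan_Some fan_path_labelsE).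
Qed.

Lemma fan_SRDF_weight_ge1 : 1 <= f None + \sum_(0 <= k < n) a k.
Proof.
rewrite -(weight_fan fan_path_labelsE).
exact: SRDF_weight_ge1 (@fan_center_universal n) _ f_SRDF.
Qed.

Lemma fan_SRDF_has_2_or_const1 :
  f None = 2 \/ (exists2 k, (k < n)%N & a k = 2) \/
  (f None = 1 /\ forall k, (k < n)%N -> a k = 1).
Proof.
case: (SRDF_has_2_or_const1 f_SRDF) => [[[j|] fj2]|const1].
- by right; left; exists j; rewrite // -fan_path_labelsE.
- by left.
by right; right; split=> // k k_lt; rewrite -[k]/(val (Ordinal k_lt)) -fan_path_labelsE.
Qed.

End FanSRDF.

Lemma fan2_SRDF_weight_ge2 (f : fan 2 -> int) : is_SRDF f -> 2 <= weight f.
Proof.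
move=> f_SRDF; rewrite (weight_fan (fan_path_labelsE f)).
have := fan_SRDF_weight_ge1 f_SRDF.
have := fan_SRDF_window f_SRDF (isT : 0 < 2)%N.
have := fan_SRDF_center_value f_SRDF.
have := fan_SRDF_path_value f_SRDF (isT : 0 < 2)%N.
have := fan_SRDF_path_value f_SRDF (isT : 1 < 2)%N.
rewrite /path_window_sum !big_nat_recr ?big_geq //=.
case: (fan_SRDF_has_2_or_const1 f_SRDF) => [|[[[|[|k]] // _]|[-> const1]]];
  last by rewrite !const1.
all: move: (f None) (fan_path_labels f 0) (fan_path_labels f 1) => c a0 a1; lia.
Qed.

Lemma fan4_SRDF_weight_ge2 (f : fan 4 -> int) : is_SRDF f -> 2 <= weight f.
Proof.
move=> f_SRDF; rewrite (weight_fan (fan_path_labelsE f)).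
have := fan_SRDF_weight_ge1 f_SRDF.
have := fan_SRDF_window f_SRDF (isT : 0 < 4)%N.
have := fan_SRDF_window f_SRDF (isT : 3 < 4)%N.
have := fan_SRDF_center_value f_SRDF.
have := fan_SRDF_path_value f_SRDF (isT : 0 < 4)%N.
have := fan_SRDF_path_value f_SRDF (isT : 1 < 4)%N.
have := fan_SRDF_path_value f_SRDF (isT : 2 < 4)%N.
have := fan_SRDF_path_value f_SRDF (isT : 3 < 4)%N.
rewrite /path_window_sum !big_nat_recr ?big_geq //=.
case: (fan_SRDF_has_2_or_const1 f_SRDF) => [|[[[|[|[|[|k]]]] // _]|[-> const1]]];
  last by rewrite !const1.
all: move: (f None) (fan_path_labels f 0) (fan_path_labels f 1) => c a0 a1.
all: move: (fan_path_labels f 2) (fan_path_labels f 3) => a2 a3; lia.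
Qed.

Theorem mainTheorem13 (n : nat) : (0 < n)%N ->
  gamma_sR_is (fan n) (if (n == 2%N) || (n == 4%N) then 2 else 1).
Proof.
move=> n_gt0; split; last first.
  move=> f f_SRDF; case: ifP => [/orP[]/eqP n_eq|_]; try subst n.
  - exact: fan2_SRDF_weight_ge2.
  - exact: fan4_SRDF_weight_ge2.
  - exact: SRDF_weight_ge1 (@fan_center_universal n) f f_SRDF.
case: ifP => [n24|n_not24].
  exists (fan_labelling n (alt 1)); split; first by apply: fan_labelling_alt_SRDF; left.
  by rewrite weight_fan_labelling sum_alt; case/orP: n24 => /eqP ->.
case: (boolP (odd n)) => [n_odd|n_even].
  exists (fan_labelling n (alt (-1))); split; first by apply: fan_labelling_alt_SRDF; right.
  by rewrite weight_fan_labelling sum_alt n_odd.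
have n_ge6 : (6 <= n)%N by move: n_gt0 n_not24 n_even; lia.
exists (fan_labelling n prefixed_alt); split; first exact: fan_labelling_prefixed_alt_SRDF.
by rewrite weight_fan_labelling sum_prefixed_alt.
Qed.
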